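(* Let $n\ge1$ and let $k$ be the localisation of the polynomial ring $\mathbb Z[s_1,\ldots,s_n]$ with respect to the multiplicative set of all homogeneous elements that are not divisible by any integer $>1$. For $j\ge1$ put $w_j=(s_1^j,\ldots,s_n^j)\in k^n$, and for $0\le i\le n$ let $W_i\subset k^n$ be the submodule generated by $w_1,\ldots,w_{n-i}$. Let $V\subset\mathbb Z^n$ be a direct summand and let $V'=V\otimes_{\mathbb Z}k\subset k^n$ be the induced direct summand of $k^n$. (1) If $\dim V=i$, then $V'\oplus W_i=k^n$. (2) If $\dim V>i$, then $V'\cap W_i$ contains an element which can be extended to a basis of $W_i$.
   Context: $\dim V$ denotes the rank of the free abelian group $V$. *)

From HB Require Import structures.
From mathcomp Require Import all_boot all_algebra.
From mathcomp.multinomials Require Import mpoly.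
Set Implicit Arguments. Unset Strict Implicit. Unset Printing Implicit Defensive.
Import GRing.Theory.
Local Open Scope ring_scope.

Definition Frac (n : nat) := {fraction {mpoly int[n]}}.

Definition emb n (p : {mpoly int[n]}) : Frac n := FracField.tofrac p.

Definition homogeneous n (p : {mpoly int[n]}) : Prop :=
  exists d : nat, forall m, m \in msupp p -> mdeg m = d.

Definition int_primitive n (p : {mpoly int[n]}) : Prop :=
  forall c : nat, (1 < c)%N -> ~ (exists q : {mpoly int[n]}, p = c%:R * q).

(* membership in k = localisation of Z[s] at homogeneous primitive elements,
   realised as a subring of the fraction field *)
Definition inK n (x : Frac n) : Prop :=
  exists p q : {mpoly int[n]},
    homogeneous q /\ int_primitive q /\ x = emb p / emb q.

Definition kvec n (v : 'rV[Frac n]_n) : Prop := forall j, inK (v 0 j).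

Definition kspan n (S : 'rV[Frac n]_n -> Prop) (x : 'rV[Frac n]_n) : Prop :=
  exists (m : nat) (c : 'I_m -> Frac n) (u : 'I_m -> 'rV[Frac n]_n),
    (forall j, inK (c j)) /\ (forall j, S (u j)) /\ x = \sum_(j < m) c j *: u j.

Definition kbasis n (M : 'rV[Frac n]_n -> Prop) (m : nat)
    (b : 'I_m -> 'rV[Frac n]_n) : Prop :=
  [/\ forall j, M (b j),
      (forall c : 'I_m -> Frac n, (forall j, inK (c j)) ->
          \sum_(j < m) c j *: b j = 0 -> forall j, c j = 0)
    & forall x, M x -> exists c : 'I_m -> Frac n,
          (forall j, inK (c j)) /\ x = \sum_(j < m) c j *: b j].

Definition wvec n (j : nat) : 'rV[Frac n]_n :=
  \row_(l < n) emb (('X_l : {mpoly int[n]}) ^+ j).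

Definition Wsub n (i : nat) : 'rV[Frac n]_n -> Prop :=
  kspan (fun x => exists j : nat, (1 <= j <= n - i)%N /\ x = wvec n j).

Definition zsubgroup n (V : 'rV[int]_n -> Prop) : Prop :=
  V 0 /\ forall x y, V x -> V y -> V (x - y).

Definition direct_summand n (V : 'rV[int]_n -> Prop) : Prop :=
  zsubgroup V /\
  exists U : 'rV[int]_n -> Prop, zsubgroup U /\
    (forall x, V x -> U x -> x = 0) /\
    (forall x, exists a b, V a /\ U b /\ x = a + b).

Definition zrank n (V : 'rV[int]_n -> Prop) (r : nat) : Prop :=
  exists b : 'I_r -> 'rV[int]_n,
    [/\ forall j, V (b j),
        (forall c : 'I_r -> int, \sum_(j < r) c j *: b j = 0 -> forall j, c j = 0)
      & forall x, V x -> exists c : 'I_r -> int, x = \sum_(j < r) c j *: b j].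

(* V' = V (x)_Z k, the k-span of the image of V in k^n *)
Definition induced n (V : 'rV[int]_n -> Prop) : 'rV[Frac n]_n -> Prop :=
  kspan (fun x => exists v, V v /\ x = map_mx (fun z : int => z%:~R) v).

(* Let b_1, ..., b_t be part of a Z-basis of V.  As V is a direct summand,
   the b_a stay linearly independent modulo every prime p.  Stack them over
   w_1, ..., w_(n-t) into an n x n matrix M over Z[s].  Its determinant is
   homogeneous, row w_j having degree j, and it is nonzero modulo every p:
   setting s_l = 0 on t columns where the b_a have an invertible minor makes
   the w-rows vanish there, and the other n - t columns give a
   Vandermonde-type system in distinct variables.  Hence det M is a unit of
   k and M is invertible over k.  With t = i = dim V this is (1).  If
   dim V > i, take t = i + 1 and solve w_(n-i) = sum_a Y_a b_a + sum_j Y'_j w_j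
   over k; then x = sum_a Y_a b_a lies in V' and equals
   w_(n-i) - sum_j Y'_j w_j, so x, w_1, ..., w_(n-i-1) is a basis of W_i. *)

From HB Require Import structures.
From mathcomp Require Import all_boot all_algebra.
From mathcomp.multinomials Require Import mpoly.
Set Implicit Arguments. Unset Strict Implicit. Unset Printing Implicit Defensive.
Import GRing.Theory.
Local Open Scope ring_scope.

Lemma intr_Fp_eq0 p (z : int) : prime p -> (z%:~R == 0 :> 'F_p) = (p %| z)%Z.
Proof.
by move=> p_pr; case: z => k; rewrite ?NegzE ?mulrNz ?oppr_eq0 -(dvdn_pcharf (pchar_Fp p_pr)).
Qed.

Section LocalRing.
Variable n : nat.
Implicit Types (p : nat) (q r : {mpoly int[n]}) (x y : Frac n).

Lemma homogeneousP q : homogeneous q <-> exists d, q \is d.-homog.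
Proof.
split=> [[d Hd]|[d /dhomogP Hd]]; exists d; last by move=> m /Hd.
by apply/dhomogP => m /Hd.
Qed.

Lemma homogeneous1 : homogeneous (1 : {mpoly int[n]}).
Proof. by apply/homogeneousP; exists 0%N; apply: dhomog1. Qed.

Lemma homogeneousM q r : homogeneous q -> homogeneous r -> homogeneous (q * r).
Proof.
move=> /homogeneousP[d hq] /homogeneousP[e hr].
by apply/homogeneousP; exists (d + e)%N; apply: dhomogM.
Qed.

Lemma map_mpoly_Fp_eq0 p q : prime p -> map_mpoly (intr : int -> 'F_p) q = 0 ->
  exists q', q = p%:R * q'.
Proof.
move=> p_pr q0; exists (\sum_(m <- msupp q) (q@_m %/ p)%Z *: 'X_[m]).
rewrite mulr_natl -(scaler_nat (R := int)) scaler_sumr {1}(mpolyE q).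
apply: eq_bigr => m _; rewrite scalerA natz mulrC divzK //.
by rewrite -intr_Fp_eq0 // -(mcoeff_map_mpoly (intr : int -> 'F_p)) q0 mcoeff0.
Qed.

Lemma int_primitiveP q : int_primitive q <->
  forall p, prime p -> map_mpoly (intr : int -> 'F_p) q != 0.
Proof.
split=> [qprim p p_pr | qred c c_gt1 [q' def_q]].
  by apply/eqP => /(map_mpoly_Fp_eq0 p_pr) q_dvd; apply: (qprim p (prime_gt1 p_pr)).
have p_pr := pdiv_prime c_gt1; have /eqP := qred _ p_pr; apply.
have /eqP c0 : (c%:R : 'F_(pdiv c)) == 0 by rewrite -(dvdn_pcharf (pchar_Fp p_pr)) pdiv_dvd.
by rewrite def_q rmorphM rmorph_nat /= -(rmorph_nat (@mpolyC n _)) c0 raddf0 mul0r.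
Qed.

Lemma int_primitive1 : int_primitive (1 : {mpoly int[n]}).
Proof. by apply/int_primitiveP => p _; rewrite rmorph1 oner_neq0. Qed.

Lemma int_primitiveM q r : int_primitive q -> int_primitive r -> int_primitive (q * r).
Proof.
move=> /int_primitiveP qprim /int_primitiveP rprim; apply/int_primitiveP => p p_pr.
by rewrite rmorphM; apply: mulf_neq0; [apply: qprim | apply: rprim].
Qed.

Lemma emb_neq0 q : int_primitive q -> emb q != 0.
Proof.
move=> qprim; rewrite /emb tofrac_eq0; apply/eqP => q0.
by apply: (qprim 2%N isT); exists 0; rewrite q0 mulr0.
Qed.

Lemma inK_emb q : inK (emb q).
Proof.
exists q, 1; split; [exact: homogeneous1 | split; [exact: int_primitive1|]].
by rewrite /emb rmorph1 divr1.
Qed.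

Lemma inK_embV q : homogeneous q -> int_primitive q -> inK (emb q)^-1.
Proof. by move=> hq pq; exists 1, q; rewrite /emb rmorph1 mul1r. Qed.

Lemma inK0 : inK (0 : Frac n).
Proof. by rewrite -(rmorph0 (@FracField.tofrac _)); apply: inK_emb. Qed.

Lemma inK1 : inK (1 : Frac n).
Proof. by rewrite -(rmorph1 (@FracField.tofrac _)); apply: inK_emb. Qed.

Lemma inKN x : inK x -> inK (- x).
Proof. by move=> [q [r [hr [pr ->]]]]; exists (- q), r; rewrite /emb rmorphN mulNr. Qed.

Lemma inKD x y : inK x -> inK y -> inK (x + y).
Proof.
move=> [q1 [r1 [h1 [p1 ->]]]] [q2 [r2 [h2 [p2 ->]]]].
exists (q1 * r2 + q2 * r1), (r1 * r2).
split; [exact: homogeneousM | split; [exact: int_primitiveM|]].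
by rewrite /emb rmorphD !rmorphM addf_div ?emb_neq0.
Qed.

Lemma inKM x y : inK x -> inK y -> inK (x * y).
Proof.
move=> [q1 [r1 [h1 [p1 ->]]]] [q2 [r2 [h2 [p2 ->]]]].
exists (q1 * q2), (r1 * r2).
split; [exact: homogeneousM | split; [exact: int_primitiveM|]].
by rewrite /emb !rmorphM mulf_div.
Qed.

Lemma inK_sum (I : Type) (s : seq I) (F : I -> Frac n) :
  (forall i, inK (F i)) -> inK (\sum_(i <- s) F i).
Proof. by move=> FK; elim/big_ind: _ => //; [exact: inK0 | exact: inKD]. Qed.

End LocalRing.

Section ZSubgroup.
Variables (n : nat) (V : 'rV[int]_n -> Prop).
Hypothesis Vsub : zsubgroup V.

Lemma zsubgroup0 : V 0. Proof. by case: Vsub. Qed.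

Lemma zsubgroupB x y : V x -> V y -> V (x - y).
Proof. by case: Vsub => _; apply. Qed.

Lemma zsubgroupN x : V x -> V (- x).
Proof. by move=> Vx; rewrite -sub0r; apply: zsubgroupB => //; apply: zsubgroup0. Qed.

Lemma zsubgroupD x y : V x -> V y -> V (x + y).
Proof. by move=> Vx Vy; rewrite -[y]opprK; apply/zsubgroupB/zsubgroupN. Qed.

Lemma zsubgroupZ (z : int) x : V x -> V (z *: x).
Proof.
move=> Vx; have VMn k : V (x *+ k).
  elim: k => [|k IHk]; first by rewrite mulr0n; apply: zsubgroup0.
  by rewrite mulrS; apply: zsubgroupD.
by case: z => k; rewrite ?NegzE ?scaleNr -?natz scaler_nat //; apply: zsubgroupN.
Qed.

Lemma zsubgroup_sum m (F : 'I_m -> 'rV[int]_n) :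
  (forall j, V (F j)) -> V (\sum_(j < m) F j).
Proof. by move=> VF; elim/big_ind: _ => //; [apply: zsubgroup0 | apply: zsubgroupD]. Qed.

End ZSubgroup.

Lemma direct_summand_divz n (V : 'rV[int]_n -> Prop) (d : int) u :
  direct_summand V -> d != 0 -> V (d *: u) -> V u.
Proof.
move=> [Vsub [U [Usub [VU0 VUspan]]]] d0 Vdu.
have [a [b [Va [Ub def_u]]]] := VUspan u; rewrite def_u in Vdu *.
have db0 : d *: b = 0.
  apply: VU0; last exact: zsubgroupZ.
  have -> : d *: b = d *: (a + b) - d *: a by rewrite scalerDr addrAC subrr add0r.
  by apply: zsubgroupB => //; apply: zsubgroupZ.
have -> : b = 0.
  apply/rowP => l; have /rowP/(_ l) := db0; rewrite !mxE => /eqP.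
  by rewrite mulf_eq0 (negbTE d0) => /eqP.
by rewrite addr0.
Qed.

Definition free_mod_primes n t (b : 'I_t -> 'rV[int]_n) : Prop :=
  forall p, prime p -> forall c : 'I_t -> 'F_p,
    \sum_(a < t) c a *: map_mx intr (b a) = 0 -> forall a, c a = 0.

Lemma direct_summand_free_mod_primes n (V : 'rV[int]_n -> Prop) r
    (b : 'I_r -> 'rV[int]_n) :
  direct_summand V -> (forall a, V (b a)) ->
  (forall c : 'I_r -> int, \sum_(a < r) c a *: b a = 0 -> forall a, c a = 0) ->
  (forall x, V x -> exists c : 'I_r -> int, x = \sum_(a < r) c a *: b a) ->
  free_mod_primes b.
Proof.
move=> VDS Vb bfree bspan p p_pr c csum0.
pose cZ a : int := (c a : nat).
have cZE a : (cZ a)%:~R = c a by exact: natr_Zp.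
pose v := \sum_(a < r) cZ a *: b a.
have v_dvd l : (p %| v ord0 l)%Z.
  rewrite -intr_Fp_eq0 //; have /rowP/(_ l) := csum0; rewrite !mxE summxE => <-.
  rewrite /v summxE rmorph_sum; apply/eqP/eq_bigr => a _.
  by rewrite !mxE rmorphM /= cZE.
pose u := \row_l (v ord0 l %/ p)%Z.
have def_v : v = p%:Z *: u by apply/rowP => l; rewrite !mxE mulrC divzK.
have [e def_u] : exists e, u = \sum_(a < r) e a *: b a.
  apply/bspan/(direct_summand_divz (d := p%:Z)) => //; first by rewrite -lt0n prime_gt0.
  rewrite -def_v; apply: zsubgroup_sum => [|a]; first by case: VDS.
  by apply: zsubgroupZ => //; case: VDS.
have cZ_dvd a : cZ a = p%:Z * e a.
  apply/eqP; rewrite -subr_eq0; apply/eqP; move: a; apply: bfree.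
  under eq_bigr do rewrite scalerBl -scalerA.
  by rewrite sumrB -/v -scaler_sumr -def_u def_v subrr.
by move=> a; rewrite -cZE cZ_dvd rmorphM /= -pmulrn pchar_Fp_0 ?mul0r.
Qed.

Lemma free_mod_primes_widen n t r (b : 'I_r -> 'rV[int]_n) (tr : (t <= r)%N) :
  free_mod_primes b -> free_mod_primes (fun a : 'I_t => b (widen_ord tr a)).
Proof.
move=> bfree p p_pr c csum0 a.
pose c' (a : 'I_r) := oapp c 0 (insub (val a)).
have := bfree p p_pr c' _ (widen_ord tr a); rewrite /c' /= valK; apply.
rewrite (bigID (fun a : 'I_r => (a < t)%N)) /= [X in _ + X]big1 ?addr0.
  by rewrite big_ord_narrow -[RHS]csum0; apply: eq_bigr => a' _; rewrite valK.
by move=> a' /negbTE a't; rewrite insubF // scale0r.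
Qed.

Lemma row_free_rows (F : fieldType) n t (b : 'I_t -> 'rV[F]_n) :
  (forall c : 'I_t -> F, \sum_(a < t) c a *: b a = 0 -> forall a, c a = 0) ->
  row_free (\matrix_(a < t) b a).
Proof.
move=> bfree; apply: inj_row_free => v; rewrite mulmx_sum_row => v0.
apply/rowP => a; rewrite mxE; apply: bfree a; rewrite -[RHS]v0.
by apply: eq_bigr => a _; rewrite rowK.
Qed.

Lemma free_mod_primes_le n t (b : 'I_t -> 'rV[int]_n) :
  free_mod_primes b -> (t <= n)%N.
Proof.
move=> /(_ 2%N isT) /row_free_rows /eqP <-; exact: rank_leq_col.
Qed.

(* Row indices are plain nats, so that the blocks of sizes t and n - t need
   no casts between 'I_n and 'I_(t + (n - t)). *)
Section Stack.
Variables (T : Type) (t : nat) (b : 'I_t -> T) (w : nat -> T).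

Definition stack (r : nat) : T := oapp b (w (r - t)%N) (insub r).

Lemma stack_ord (a : 'I_t) : stack a = b a.
Proof. by rewrite /stack valK. Qed.

Lemma stack_addn j : stack (t + j) = w j.
Proof. by rewrite /stack insubF ?addKn // ltnNge leq_addr. Qed.

End Stack.

Lemma big_ord_cut (V : nmodType) n t (G : nat -> V) : (t <= n)%N ->
  \sum_(r < n) G r = \sum_(a < t) G a + \sum_(j < n - t) G (t + j)%N.
Proof.
move=> tn; rewrite -!(big_mkord xpredT) (big_cat_nat (n := t)) //=.
congr (_ + _); rewrite -{1}(add0n t) big_addn big_mkord.
by apply: eq_bigr => j _; rewrite addnC.
Qed.

Lemma sum_stack (R : pzRingType) (U : lmodType R) n t (b : 'I_t -> U) w
    (Y : nat -> R) : (t <= n)%N ->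
  \sum_(r < n) Y r *: stack b w r =
  \sum_(a < t) Y a *: b a + \sum_(j < n - t) Y (t + j)%N *: w j.
Proof.
move=> tn; rewrite (big_ord_cut (fun r => Y r *: stack b w r) tn).
by congr (_ + _); apply: eq_bigr => r _; rewrite ?stack_ord ?stack_addn.
Qed.

Definition stack_mx (R : Type) n t (b : 'I_t -> 'rV[R]_n) (w : nat -> 'rV[R]_n) :
  'M[R]_n := \matrix_(r < n) stack b w r.

Definition entry (R : nmodType) n (z : 'rV[R]_n) (r : nat) : R := oapp (z 0) 0 (insub r).

Lemma entry_ord (R : nmodType) n (z : 'rV[R]_n) (i : 'I_n) : entry z i = z 0 i.
Proof. by rewrite /entry valK. Qed.

Lemma entry_row (R : nmodType) n (F : nat -> R) r : (r < n)%N ->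
  entry (\row_(i < n) F i) r = F r.
Proof. by move=> rn; rewrite /entry insubT /= mxE. Qed.

Lemma mul_stack_mx (R : pzRingType) n t (b : 'I_t -> 'rV[R]_n) w (z : 'rV[R]_n) :
  (t <= n)%N -> z *m stack_mx b w =
  \sum_(a < t) entry z a *: b a + \sum_(j < n - t) entry z (t + j) *: w j.
Proof.
move=> tn; rewrite mulmx_sum_row -sum_stack //.
by apply: eq_bigr => r _; rewrite rowK entry_ord.
Qed.

Lemma map_stack_mx (R S : Type) (f : R -> S) n t (b : 'I_t -> 'rV[R]_n) w :
  map_mx f (stack_mx b w) =
  stack_mx (fun a => map_mx f (b a)) (fun j => map_mx f (w j)).
Proof. by apply/matrixP => r l; rewrite !mxE /stack; case: insub => [a|] /=; rewrite mxE. Qed.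

Lemma coefs_eq0_of_roots (F : idomainType) q (c : nat -> F) (rs : seq F) :
  uniq rs -> 0 \notin rs -> (q <= size rs)%N ->
  (forall x, x \in rs -> \sum_(j < q) c j * x ^+ j.+1 = 0) ->
  forall j, (j < q)%N -> c j = 0.
Proof.
move=> rs_uniq rs0 q_le rs_roots.
pose P := \poly_(j < q.+1) (if j is k.+1 then c k else 0).
have Peval x : P.[x] = \sum_(j < q) c j * x ^+ j.+1.
  by rewrite horner_poly big_ord_recl mul0r add0r.
have P0 : P = 0.
  apply: contraTeq q_le => /(max_poly_roots (rs := 0 :: rs)) /= lt_rsP.
  rewrite -ltnNge -ltnS (leq_trans (lt_rsP _ _) (size_poly _ _)) //= ?rs0 ?rs_uniq //.
  rewrite /root Peval big1 => [|j _]; last by rewrite expr0n mulr0.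
  by rewrite eqxx; apply/allP => x /rs_roots; rewrite /root Peval => ->.
move=> j jq; have := coef_poly q.+1 (fun j => if j is k.+1 then c k else 0) j.+1.
by rewrite -/P P0 coef0 ltnS jq.
Qed.

Lemma free_rows_unit_minor (F : fieldType) n t (b : 'I_t -> 'rV[F]_n) :
  (forall c : 'I_t -> F, \sum_(a < t) c a *: b a = 0 -> forall a, c a = 0) ->
  exists f : 'I_t -> 'I_n, forall (K : fieldType) (g : {rmorphism F -> K})
    (y : 'I_t -> K), (forall a', \sum_(a < t) y a * g (b a 0 (f a')) = 0) ->
  forall a, y a = 0.
Proof.
move=> /row_free_rows Bfree; pose B := \matrix_(a < t) b a.
have Bfull : row_full B^T by rewrite /row_full mxrank_tr.
exists (fullrankfun Bfull) => K g y y0 a.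
pose Y := \row_(a < t) y a.
have /eqP : Y *m map_mx g (rowsub (fullrankfun Bfull) B^T)^T = 0.
  by apply/rowP => a'; rewrite !mxE -[RHS](y0 a'); apply: eq_bigr => a'' _; rewrite !mxE.
rewrite mulmx_free_eq0 => [/eqP/rowP/(_ a)|]; first by rewrite !mxE.
by rewrite row_free_unit map_unitmx unitmx_tr fullrowsub_unit.
Qed.

Definition Xpow (R : nzRingType) n (j : nat) : 'rV[{mpoly R[n]}]_n :=
  \row_l 'X_l ^+ j.+1.

Lemma tofrac_X_inj (R : idomainType) n :
  injective (fun l : 'I_n => FracField.tofrac ('X_l : {mpoly R[n]})).
Proof.
move=> l l' /eqP; rewrite tofrac_eq => /eqP /(congr1 (mcoeff U_(l))).
by rewrite !mcoeffXU eqxx; case: eqP => // _ /eqP; rewrite oner_eq0.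
Qed.

Lemma tofrac_X_neq0 (R : idomainType) n (l : 'I_n) :
  FracField.tofrac ('X_l : {mpoly R[n]}) != 0.
Proof.
rewrite tofrac_eq0; apply/eqP => /(congr1 (mcoeff U_(l))).
by rewrite mcoeffXU eqxx mcoeff0 => /eqP; rewrite oner_eq0.
Qed.

Lemma card_predC_codom m n (f : 'I_m -> 'I_n) : (m <= n)%N ->
  (n - m <= #|[predC codom f]|)%N.
Proof.
move=> mn; have card_f : (#|codom f| <= m)%N.
  by rewrite (leq_trans (card_size _)) // size_codom card_ord.
have : (#|codom f| + #|[predC codom f]| == #|codom f| + (n - #|codom f|))%N.
  by rewrite cardC card_ord subnKC // (leq_trans card_f mn).
by rewrite eqn_add2l => /eqP ->; rewrite leq_sub2l.
Qed.

Lemma det_stack_Xpow_neq0 (F : fieldType) n t (b : 'I_t -> 'rV[F]_n) :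
  (t <= n)%N ->
  (forall c : 'I_t -> F, \sum_(a < t) c a *: b a = 0 -> forall a, c a = 0) ->
  \det (stack_mx (fun a => map_mx (@mpolyC n F) (b a)) (@Xpow F n)) != 0.
Proof.
move=> tn /free_rows_unit_minor [f minor_free].
set M := stack_mx _ _; pose K := {fraction {mpoly F[n]}}.
(* On the columns f the specialised w-rows vanish. *)
pose sg l : K := if l \in codom f then 0 else FracField.tofrac 'X_l.
pose phi : {rmorphism {mpoly F[n]} -> K} :=
  mmap (@FracField.tofrac _ \o @mpolyC n F) sg.
apply/negP => /eqP det0.
have /det0P [y y_neq0] : \det (map_mx phi M) == 0 by rewrite det_map_mx det0 rmorph0.
rewrite map_stack_mx mul_stack_mx // => /rowP col0.
have col l : \sum_(a < t) entry y a * FracField.tofrac (b a 0 l)%:MP +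
    \sum_(j < n - t) entry y (t + j) * sg l ^+ j.+1 = 0.
  have := col0 l; rewrite !mxE !summxE; under eq_bigr do rewrite !mxE /= mmapC.
  by under [X in _ + X]eq_bigr do rewrite !mxE rmorphXn /= mmapX mmap1U.
have yB0 (a : 'I_t) : entry y a = 0.
  move: a; apply: (minor_free K (@FracField.tofrac _ \o @mpolyC n F)) => a'.
  have := col (f a'); rewrite [X in _ + X]big1 ?addr0 // => j _.
  by rewrite /sg codom_f expr0n mulr0.
have yW0 : forall j, (j < n - t)%N -> entry y (t + j) = 0.
  apply: (coefs_eq0_of_roots (c := fun j => entry y (t + j))
    (rs := [seq FracField.tofrac 'X_l | l <- enum [predC codom f]])).
  - by rewrite map_inj_uniq ?enum_uniq //; apply: tofrac_X_inj.
  - by apply/mapP => [[l _ /esym/eqP]]; rewrite (negbTE (tofrac_X_neq0 F l)).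
  - by rewrite size_map -cardE card_predC_codom.
  move=> x /mapP [l]; rewrite mem_enum => /= lf ->; have := col l.
  by rewrite big1 ?add0r /sg ?(negbTE lf) // => a _; rewrite yB0 mul0r.
move/negP: y_neq0; apply; apply/eqP/rowP => r; rewrite mxE -entry_ord.
have [rt | tr] := ltnP r t; first exact: (yB0 (Ordinal rt)).
rewrite -(subnKC tr); apply: yW0.
by rewrite ltn_sub2r // (leq_ltn_trans tr).
Qed.

Lemma det_dhomog (R : comRingType) n k (M : 'M[{mpoly R[n]}]_k) (d : 'I_k -> nat) :
  (forall r l, M r l \is (d r).-homog) -> \det M \is (\sum_r d r)%N.-homog.
Proof.
move=> Mhom; apply: rpred_sum => s _; rewrite rpredMsign.
elim/big_ind2: _ => [|d1 d2 x1 x2|r _]; [exact: dhomog1 | exact: dhomogM | exact: Mhom].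
Qed.

Lemma emb_mx_solve n (M : 'M[{mpoly int[n]}]_n) x :
  homogeneous (\det M) -> int_primitive (\det M) -> kvec x ->
  exists2 z, kvec z & x = z *m map_mx (@emb n) M.
Proof.
move=> Mhom Mprim xk; exists ((emb (\det M))^-1 *: (x *m map_mx (@emb n) (\adj M))).
  move=> l; rewrite !mxE; apply: inKM; first exact: inK_embV.
  by apply: inK_sum => l'; rewrite !mxE; apply: inKM => //; apply: inK_emb.
rewrite -scalemxAl -mulmxA /emb map_mx_adj mul_adj_mx -det_map_mx -/emb.
by rewrite mul_mx_scalar scalerA mulVf ?scale1r // det_map_mx emb_neq0.
Qed.

Lemma emb_mx_free n (M : 'M[{mpoly int[n]}]_n) (z : 'rV[Frac n]_n) :
  int_primitive (\det M) -> z *m map_mx (@emb n) M = 0 -> z = 0.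
Proof.
move=> Mprim /eqP; rewrite mulmx_free_eq0 => [/eqP //|].
by rewrite row_free_unit unitmxE unitfE det_map_mx emb_neq0.
Qed.

Section StackedBasis.
Variables (n t : nat) (b : 'I_t -> 'rV[int]_n).
Hypotheses (tn : (t <= n)%N) (bfree : free_mod_primes b).

Local Notation MZ := (stack_mx (fun a => map_mx intr (b a)) (@Xpow int n)).

Lemma det_stack_homogeneous : homogeneous (\det MZ).
Proof.
apply/homogeneousP; exists (\sum_(r < n) stack (fun _ : 'I_t => 0%N) succn r)%N.
apply: det_dhomog => r l; rewrite !mxE /stack; case: insub => [a|] /=; rewrite !mxE.
  by rewrite -[_%:~R]scaler_int; apply/dhomogZ/dhomog1.
by rewrite -[X in _ \is X.-homog]mul1n; apply: dhomogMn; rewrite dhomogX /= mdeg1.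
Qed.

Lemma det_stack_int_primitive : int_primitive (\det MZ).
Proof.
apply/int_primitiveP => p p_pr; rewrite -det_map_mx.
have -> : map_mx (map_mpoly (intr : int -> 'F_p)) MZ =
    stack_mx (fun a => map_mx (@mpolyC n _) (map_mx intr (b a))) (@Xpow _ n).
  apply/matrixP => r l; rewrite !mxE /stack; case: insub => [a|] /=; rewrite !mxE.
    by rewrite !rmorph_int.
  by rewrite rmorphXn /= map_mpolyX.
apply: det_stack_Xpow_neq0 => // c; exact: bfree.
Qed.

Lemma emb_stack_mx : map_mx (@emb n) MZ =
  stack_mx (fun a => map_mx intr (b a)) (fun j => wvec n j.+1).
Proof.
apply/matrixP => r l; rewrite !mxE /stack; case: insub => [a|] /=; rewrite !mxE //.
exact: rmorph_int.
Qed.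

Lemma stack_basis_solve x : kvec x -> exists2 Y : nat -> Frac n,
  forall r, inK (Y r) &
  x = \sum_(a < t) Y a *: map_mx intr (b a) + \sum_(j < n - t) Y (t + j)%N *: wvec n j.+1.
Proof.
move=> /(emb_mx_solve det_stack_homogeneous det_stack_int_primitive) [z zk ->].
exists (entry z); last by rewrite emb_stack_mx mul_stack_mx.
by move=> r; rewrite /entry; case: insub => [l|] /=; [apply: zk | apply: inK0].
Qed.

Lemma stack_basis_free (c : 'I_t -> Frac n) (d : nat -> Frac n) :
  \sum_(a < t) c a *: map_mx intr (b a) + \sum_(j < n - t) d j *: wvec n j.+1 = 0 ->
  (forall a, c a = 0) /\ (forall j, (j < n - t)%N -> d j = 0).
Proof.
pose z := \row_(r < n) stack c d r.
have -> : \sum_(a < t) c a *: map_mx intr (b a) + \sum_(j < n - t) d j *: wvec n j.+1 =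
    z *m map_mx (@emb n) MZ.
  rewrite emb_stack_mx mul_stack_mx //; congr (_ + _); apply: eq_bigr => r _.
    by rewrite entry_row ?stack_ord // (leq_trans (ltn_ord r) tn).
  by rewrite entry_row ?stack_addn // -ltn_subRL.
move=> /(emb_mx_free det_stack_int_primitive) z0; split => [a|j jt].
  have an : (a < n)%N := leq_trans (ltn_ord a) tn.
  by have := entry_row (stack c d) an; rewrite -/z z0 stack_ord /entry insubT /= mxE.
have jn : (t + j < n)%N by rewrite -ltn_subRL.
by have := entry_row (stack c d) jn; rewrite -/z z0 stack_addn /entry insubT /= mxE.
Qed.

End StackedBasis.

Lemma kspan_ind n (S Q : 'rV[Frac n]_n -> Prop) :
  Q 0 -> (forall x y, Q x -> Q y -> Q (x + y)) ->
  (forall c x, inK c -> Q x -> Q (c *: x)) -> (forall x, S x -> Q x) ->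
  forall x, kspan S x -> Q x.
Proof.
move=> Q0 QD QZ QS x [m [c [u [ck [Su ->]]]]].
by elim/big_ind: _ => // j _; apply/QZ/QS.
Qed.

Lemma kspan_gen n (S : 'rV[Frac n]_n -> Prop) x : S x -> kspan S x.
Proof.
move=> Sx; exists 1%N, (fun=> 1), (fun=> x).
by split; [move=> _; apply: inK1 | split => //; rewrite big_ord1 scale1r].
Qed.

Lemma Wsub_wvec n i k : (1 <= k <= n - i)%N -> @Wsub n i (wvec n k).
Proof. by move=> kni; apply: kspan_gen; exists k. Qed.

Lemma Wsub_comb n i (c : nat -> Frac n) : (forall j, inK (c j)) ->
  @Wsub n i (\sum_(j < n - i) c j *: wvec n j.+1).
Proof.
move=> ck; exists (n - i)%N, (fun j => c j), (fun j => wvec n j.+1).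
by do 2![split=> //] => j; exists j.+1; rewrite ltn_ord.
Qed.

Lemma Wsub_coords n i x : @Wsub n i x ->
  exists c : nat -> Frac n, x = \sum_(j < n - i) c j *: wvec n j.+1.
Proof.
move: x; apply: kspan_ind
  => [|_ _ [c1 ->] [c2 ->]|a _ _ [c ->]|_ [k [/andP [k_gt0 kni] ->]]].
- by exists (fun=> 0); rewrite big1 // => j _; rewrite scale0r.
- by exists (fun j => c1 j + c2 j); rewrite -big_split; apply: eq_bigr => j _; rewrite scalerDl.
- by exists (fun j => a * c j); rewrite scaler_sumr; apply: eq_bigr => j _; rewrite scalerA.
exists (fun j => (j.+1 == k)%:R); rewrite -(prednK k_gt0) in kni *.
rewrite (bigD1 (Ordinal kni)) //= eqxx scale1r big1 ?addr0 // => j /eqP jk.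
by rewrite eqSS; case: eqP => [jk'|_]; [case: jk; apply: val_inj | rewrite scale0r].
Qed.

Lemma induced_coords n (V : 'rV[int]_n -> Prop) r (b : 'I_r -> 'rV[int]_n) x :
  (forall v, V v -> exists c : 'I_r -> int, v = \sum_(a < r) c a *: b a) ->
  induced V x -> exists c : 'I_r -> Frac n, x = \sum_(a < r) c a *: map_mx intr (b a).
Proof.
move=> bspan; move: x.
apply: kspan_ind => [|_ _ [c1 ->] [c2 ->]|e _ _ [c ->]|_ [v [/bspan [c ->] ->]]].
- by exists (fun=> 0); rewrite big1 // => a _; rewrite scale0r.
- by exists (fun a => c1 a + c2 a); rewrite -big_split; apply: eq_bigr => a _; rewrite scalerDl.
- by exists (fun a => e * c a); rewrite scaler_sumr; apply: eq_bigr => a _; rewrite scalerA.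
exists (fun a => (c a)%:~R); apply/rowP => l; rewrite !mxE !summxE rmorph_sum.
by apply: eq_bigr => a _; rewrite !mxE rmorphM.
Qed.

Lemma wvec_free n q (c : nat -> Frac n) : (q <= n)%N ->
  \sum_(j < q) c j *: wvec n j.+1 = 0 -> forall j, (j < q)%N -> c j = 0.
Proof.
move=> qn /rowP sum0.
apply: (coefs_eq0_of_roots (rs := [seq emb ('X_l : {mpoly int[n]}) | l <- enum 'I_n])).
- by rewrite map_inj_uniq ?enum_uniq //; apply: tofrac_X_inj.
- by apply/mapP => [[l _ /esym/eqP]]; rewrite (negbTE (tofrac_X_neq0 int l)).
- by rewrite size_map size_enum_ord.
move=> _ /mapP [l _ ->]; have := sum0 l; rewrite !mxE summxE => col0.
by rewrite -[RHS]col0; apply: eq_bigr => j _; rewrite !mxE /emb rmorphXn.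
Qed.

Definition shear_basis n m (y : nat -> Frac n) (k : 'I_m.+1) : 'rV[Frac n]_n :=
  if val k == 0%N then wvec n m.+1 - \sum_(j < m) y j *: wvec n j.+1 else wvec n k.

Section ShearBasis.
Variables (n i m : nat) (y : nat -> Frac n).
Hypotheses (nim : (n - i)%N = m.+1) (yk : forall j, inK (y j)).

Lemma shear_basis_Wsub (k : 'I_m.+1) : @Wsub n i (shear_basis y k).
Proof.
rewrite /shear_basis; case: eqP => [_|/eqP k_neq0]; last first.
  by apply: Wsub_wvec; rewrite lt0n k_neq0 nim ltnW.
pose c j := if (j < m)%N then - y j else 1.
have -> : wvec n m.+1 - \sum_(j < m) y j *: wvec n j.+1 =
    \sum_(j < n - i) c j *: wvec n j.+1.
  rewrite nim big_ord_recr /= /c ltnn scale1r addrC; congr (_ + _).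
  by rewrite -sumrN; apply: eq_bigr => j _; rewrite ltn_ord scaleNr.
by apply: Wsub_comb => j; rewrite /c; case: ifP => _; [apply: inKN | apply: inK1].
Qed.

Lemma shear_basis_free (c : 'I_m.+1 -> Frac n) :
  \sum_(k < m.+1) c k *: shear_basis y k = 0 -> forall k, c k = 0.
Proof.
pose cn j := c (inord j); have cE k : c k = cn k by rewrite /cn inord_val.
pose d j := if (j < m)%N then cn j.+1 - cn 0%N * y j else cn 0%N.
rewrite big_ord_recl /shear_basis /= => sum0.
have /wvec_free d0 : \sum_(j < m.+1) d j *: wvec n j.+1 = 0.
  rewrite -[RHS]sum0 big_ord_recr /= /d ltnn cE scalerBr scaler_sumr addrC -addrA.
  congr (_ + _); rewrite addrC -sumrN -big_split; apply: eq_bigr => j _.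
  by rewrite ltn_ord cE /= scalerBl scalerA.
have {}d0 : forall j, (j < m.+1)%N -> d j = 0 by apply: d0; rewrite -nim leq_subr.
have cn0 : cn 0%N = 0 by have := d0 m (ltnSn m); rewrite /d ltnn.
move=> k; rewrite cE; case: (posnP k) => [-> // | k_gt0].
have km : (k <= m)%N by rewrite -ltnS ltn_ord.
have := d0 k.-1; rewrite /d prednK // km => /(_ (leq_trans km (leqnSn m))).
by rewrite cn0 mul0r subr0.
Qed.

Lemma shear_basis_span v : @Wsub n i v -> exists c : 'I_m.+1 -> Frac n,
  (forall k, inK (c k)) /\ v = \sum_(k < m.+1) c k *: shear_basis y k.
Proof.
move: v; apply: kspan_ind.
- exists (fun=> 0); split=> [_|]; first exact: inK0.
  by rewrite big1 // => k _; rewrite scale0r.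
- move=> _ _ [c1 [c1k ->]] [c2 [c2k ->]]; exists (fun k => c1 k + c2 k).
  split=> [k|]; first exact: inKD.
  by rewrite -big_split; apply: eq_bigr => k _; rewrite scalerDl.
- move=> a _ ak [c [ck ->]]; exists (fun k => a * c k); split=> [k|]; first exact: inKM.
  by rewrite scaler_sumr; apply: eq_bigr => k _; rewrite scalerA.
move=> _ [k [/andP [k_gt0 kn] ->]]; rewrite nim leq_eqVlt in kn.
case/orP: kn => [/eqP -> | km].
  exists (fun j : 'I_m.+1 => if val j == 0%N then 1 else y j.-1); split.
    by move=> j; case: eqP => _; [apply: inK1 | apply: yk].
  rewrite big_ord_recl /shear_basis /= scale1r.
  by rewrite -[LHS](subrK (\sum_(j < m) y j *: wvec n j.+1)); congr (_ + _); apply: eq_bigr.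
exists (fun j : 'I_m.+1 => (j == Ordinal km)%:R); split=> [j|].
  by case: eqP => _; [apply: inK1 | apply: inK0].
rewrite (bigD1 (Ordinal km)) //= eqxx scale1r big1 ?addr0 => [|j /negbTE ->].
  by rewrite /shear_basis /= eqn0Ngt k_gt0.
by rewrite scale0r.
Qed.

Lemma shear_basis_kbasis : kbasis (@Wsub n i) (@shear_basis n m y).
Proof.
split; [exact: shear_basis_Wsub | move=> c _; exact: shear_basis_free |].
exact: shear_basis_span.
Qed.

End ShearBasis.

Lemma induced_Wsub_cover n i (V : 'rV[int]_n -> Prop) :
  (i <= n)%N -> direct_summand V -> zrank V i ->
  forall x, kvec x -> exists a b, induced V a /\ @Wsub n i b /\ x = a + b.
Proof.
move=> i_le_n VDS [b [Vb bfree bspan]] x.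
move=> /(stack_basis_solve i_le_n (direct_summand_free_mod_primes VDS Vb bfree bspan)).
move=> [Y Yk ->].
exists (\sum_(a < i) Y a *: map_mx intr (b a)), (\sum_(j < n - i) Y (i + j)%N *: wvec n j.+1).
split; last by split=> //; apply: (@Wsub_comb n i (fun j => Y (i + j)%N)).
exists i, (fun a => Y a), (fun a => map_mx intr (b a)).
by split=> //; split=> // a; exists (b a).
Qed.

Lemma induced_Wsub_meet0 n i (V : 'rV[int]_n -> Prop) :
  (i <= n)%N -> direct_summand V -> zrank V i ->
  forall x, induced V x -> @Wsub n i x -> x = 0.
Proof.
move=> i_le_n VDS [b [Vb bfree bspan]] x /(induced_coords bspan) [c def_x].
move=> /Wsub_coords [d def_x'].
have bfree_p := direct_summand_free_mod_primes VDS Vb bfree bspan.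
have [|c0 _] := @stack_basis_free n i b i_le_n bfree_p c (fun j => - d j).
  by under [X in _ + X]eq_bigr do rewrite scaleNr; rewrite sumrN -def_x -def_x' subrr.
by rewrite def_x big1 // => a _; rewrite c0 scale0r.
Qed.

Lemma induced_Wsub_basis_elt n i r (V : 'rV[int]_n -> Prop) :
  direct_summand V -> zrank V r -> (i < r)%N ->
  exists x, induced V x /\ @Wsub n i x /\
    exists (m : nat) (b : 'I_m.+1 -> 'rV[Frac n]_n), kbasis (@Wsub n i) b /\ b ord0 = x.
Proof.
move=> VDS [b [Vb bfree bspan]] ir.
have bfree_p := direct_summand_free_mod_primes VDS Vb bfree bspan.
have ltin : (i < n)%N := leq_trans ir (free_mod_primes_le bfree_p).
have [Y Yk def_w] : exists2 Y : nat -> Frac n, forall r, inK (Y r) &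
    wvec n (n - i) = \sum_(a < i.+1) Y a *: map_mx intr (b (widen_ord ir a)) +
      \sum_(j < n - i.+1) Y (i.+1 + j)%N *: wvec n j.+1.
  apply: (stack_basis_solve ltin (@free_mod_primes_widen n i.+1 r b ir bfree_p)).
  by move=> l; rewrite mxE; apply: inK_emb.
set m := (n - i.+1)%N in def_w; have nim : (n - i)%N = m.+1 by rewrite /m subnSK.
have Wbasis := shear_basis_kbasis nim (fun j => Yk (i.+1 + j)%N).
set x := \sum_(a < i.+1) _ in def_w.
have def_x : x = @shear_basis n m (fun j => Y (i.+1 + j)%N) ord0.
  by rewrite /shear_basis /= -nim def_w addrK.
exists x; split.
  exists i.+1, (fun a => Y a), (fun a => map_mx intr (b (widen_ord ir a))).
  by split=> //; split=> // a; exists (b (widen_ord ir a)).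
rewrite def_x; split; first by case: Wbasis.
by exists m, (@shear_basis n m (fun j => Y (i.+1 + j)%N)).
Qed.

Unset Implicit Arguments.

Theorem lemma3p1 (n i : nat) (V : 'rV[int]_n -> Prop) :
  (1 <= n)%N -> (i <= n)%N -> direct_summand V ->
  (zrank V i ->
     (forall x, kvec x -> exists a b,
          induced V a /\ @Wsub n i b /\ x = a + b) /\
     (forall x, induced V x -> @Wsub n i x -> x = 0)) /\
  (forall r : nat, zrank V r -> (i < r)%N ->
     exists x, induced V x /\ @Wsub n i x /\
       exists (m : nat) (b : 'I_m.+1 -> 'rV[Frac n]_n),
         kbasis (@Wsub n i) b /\ b ord0 = x).
Proof.
move=> _ i_le_n VDS; split=> [Vrank | r Vrank ir].
  by split; [apply: induced_Wsub_cover | apply: induced_Wsub_meet0].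
exact: induced_Wsub_basis_elt VDS Vrank ir.
Qed.
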